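(* Let $\mathcal{A}\in\mathbb{C}^{n\times n\times n\times n}$ be a CPS tensor. Then $\langle X,\mathcal{A}X\rangle\ge0$ for all Hermitian positive semidefinite $X\in\mathbb{C}^{n\times n}$ if and only if $\langle X,\mathcal{A}X\rangle\ge0$ for all real symmetric positive semidefinite $X\in\mathbb{R}^{n\times n}$.
   Context: A tensor $\mathcal{A}\in\mathbb{C}^{n\times n\times n\times n}$ is conjugate partial-symmetric (CPS) if $\mathcal{A}_{ijkl}=\overline{\mathcal{A}_{klij}}$ and $\mathcal{A}_{ijkl}=\mathcal{A}_{jikl}=\mathcal{A}_{ijlk}$ for all indices. For $X\in\mathbb{C}^{n\times n}$, $\langle X,\mathcal{A}X\rangle=\sum_{i,j,k,l}\mathcal{A}_{ijkl}X_{kl}\overline{X_{ij}}$. *)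

From HB Require Import structures.
From mathcomp Require Import all_boot all_order all_algebra.
From mathcomp Require Import complex.
From mathcomp Require Import reals.
Set Implicit Arguments. Unset Strict Implicit. Unset Printing Implicit Defensive.
Import Order.TTheory GRing.Theory Num.Theory.
Local Open Scope ring_scope.

Definition tensor4 (C : Type) (n : nat) := 'I_n -> 'I_n -> 'I_n -> 'I_n -> C.

Definition CPS (R : realType) (n : nat) (A : tensor4 R[i] n) : Prop :=
  (forall i j k l, A i j k l = (A k l i j)^*) /\
  (forall i j k l, A i j k l = A j i k l) /\
  (forall i j k l, A i j k l = A i j l k).

Definition tform (R : realType) (n : nat) (A : tensor4 R[i] n)
    (X : 'M[R[i]]_n) : R[i] :=
  \sum_(i < n) \sum_(j < n) \sum_(k < n) \sum_(l < n)
     A i j k l * X k l * (X i j)^*.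

Definition ctrmx (R : realType) (m n : nat) (M : 'M[R[i]]_(m, n)) : 'M[R[i]]_(n, m) :=
  (map_mx Num.conj M)^T.

Definition herm_psd (R : realType) (n : nat) (X : 'M[R[i]]_n) : Prop :=
  ctrmx X = X /\ forall v : 'cV[R[i]]_n, 0 <= (ctrmx v *m X *m v) 0 0.

Definition sym_psd (R : realType) (n : nat) (X : 'M[R]_n) : Prop :=
  X^T = X /\ forall v : 'cV[R]_n, 0 <= (v^T *m X *m v) 0 0.

Definition cmx (R : realType) (m n : nat) (X : 'M[R]_(m, n)) : 'M[R[i]]_(m, n) :=
  map_mx (fun x : R => (x%:C)%C) X.

From HB Require Import structures.
From mathcomp Require Import all_boot all_order all_algebra.
From mathcomp Require Import complex.
From mathcomp Require Import reals.
From mathcomp Require Import ring.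
Set Implicit Arguments. Unset Strict Implicit. Unset Printing Implicit Defensive.
Import Order.TTheory GRing.Theory Num.Theory.
Local Open Scope ring_scope.

(* For a CPS tensor, <X, A X> only sees the symmetric part (X + X^T)/2 of X,
   and for Hermitian X this symmetric part is the real matrix Re X.  If X is
   Hermitian PSD then Re X is real symmetric PSD, since u^T (Re X) u = u^T X u
   for real u.  Conversely a real symmetric PSD matrix Y is Hermitian PSD:
   writing v = a + i b, one gets v^* Y v = a^T Y a + b^T Y b. *)

Section Symmetrization.
Variables (K : numFieldType) (n : nat).

Definition symmx (X : 'M[K]_n) : 'M[K]_n :=
  \matrix_(i, j) ((X i j + X j i) / 2%:R).

Lemma sum_mul_symmetrize (F M : 'I_n -> 'I_n -> K) :
  (forall i j, F i j = F j i) ->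
  \sum_i \sum_j F i j * M i j = \sum_i \sum_j F i j * ((M i j + M j i) / 2%:R).
Proof.
move=> FC.
have swap : \sum_i \sum_j F i j * M j i = \sum_i \sum_j F i j * M i j.
  by rewrite exchange_big; apply: eq_bigr => i _; apply: eq_bigr => j _; rewrite FC.
have -> : \sum_i \sum_j F i j * ((M i j + M j i) / 2%:R) =
    (\sum_i \sum_j F i j * M i j + \sum_i \sum_j F i j * M j i) / 2%:R.
  rewrite -big_split mulr_suml; apply: eq_bigr => i _.
  by rewrite -big_split mulr_suml; apply: eq_bigr => j _ /=; ring.
by rewrite swap; field.
Qed.

Lemma bilinear_formE (u v : 'cV[K]_n) (X : 'M[K]_n) :
  (u^T *m X *m v) 0 0 = \sum_i \sum_j u i 0 * v j 0 * X i j.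
Proof.
rewrite mxE; under eq_bigr => j _ do rewrite mxE big_distrl /=.
rewrite exchange_big; apply: eq_bigr => i _; apply: eq_bigr => j _.
by rewrite !mxE; ring.
Qed.

Lemma quad_form_symmx (u : 'cV[K]_n) (X : 'M[K]_n) :
  (u^T *m X *m u) 0 0 = (u^T *m symmx X *m u) 0 0.
Proof.
rewrite !bilinear_formE (@sum_mul_symmetrize (fun i j => u i 0 * u j 0)).
  by apply: eq_bigr => i _; apply: eq_bigr => j _; rewrite mxE.
by move=> i j; rewrite mulrC.
Qed.

End Symmetrization.

Section ComplexMatrices.
Variables (R : realType) (n : nat).
Local Notation Re := (@complex.Re R).
Local Notation Im := (@complex.Im R).

Lemma Re_conj (z : R[i]) : Re z^* = Re z.
Proof. by case: z. Qed.

Lemma add_conj_Re (z : R[i]) : (z + z^*) / 2%:R = (Re z)%:C%C.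
Proof. by rewrite ReJ_add. Qed.

Lemma conj_mul_sym_Re (z w : R[i]) :
  (z^* * w + w^* * z) / 2%:R = (Re z * Re w + Im z * Im w)%:C%C.
Proof.
have -> : z^* * w + w^* * z = (Re z * Re w + Im z * Im w)%:C%C * 2%:R.
  case: z => a b; case: w => c d; simpc => /=; congr (_ +i* _)%C; ring.
by rewrite mulfK ?pnatr_eq0.
Qed.

Lemma conj_symmx (X : 'M[R[i]]_n) i j :
  (symmx X i j)^* = ((X i j)^* + (X j i)^*) / 2%:R.
Proof. by rewrite mxE rmorphM rmorphD fmorphV rmorph_nat. Qed.

Lemma ctrmx_cmx m p (Y : 'M[R]_(m, p)) : ctrmx (cmx Y) = (cmx Y)^T.
Proof. by apply/matrixP => i j; rewrite !mxE; exact: conjc_real. Qed.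

Lemma herm_entryC (X : 'M[R[i]]_n) : ctrmx X = X -> forall i j, X j i = (X i j)^*.
Proof. by move/matrixP => XH i j; rewrite -[in LHS]XH !mxE. Qed.

Lemma symmx_herm (X : 'M[R[i]]_n) :
  ctrmx X = X -> symmx X = cmx (map_mx Re X).
Proof.
by move=> XH; apply/matrixP => i j; rewrite !mxE (herm_entryC XH i j) add_conj_Re.
Qed.

Lemma tform_symmx (A : tensor4 R[i] n) (X : 'M[R[i]]_n) :
  (forall i j k l, A i j k l = A j i k l) ->
  (forall i j k l, A i j k l = A i j l k) ->
  tform A X = tform A (symmx X).
Proof.
move=> A12 A34.
have tformE Z : tform A Z =
    \sum_i \sum_j (\sum_k \sum_l A i j k l * Z k l) * (Z i j)^*.
  apply: eq_bigr => i _; apply: eq_bigr => j _.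
  by rewrite mulr_suml; apply: eq_bigr => k _; rewrite mulr_suml.
have inner_sym (Z : 'M[R[i]]_n) i j :
    \sum_k \sum_l A i j k l * Z k l = \sum_k \sum_l A i j k l * symmx Z k l.
  rewrite (@sum_mul_symmetrize _ _ (A i j)) => [|k l]; last exact: A34.
  by apply: eq_bigr => k _; apply: eq_bigr => l _; rewrite mxE.
rewrite !tformE (@sum_mul_symmetrize _ _ _ (fun i j => (X i j)^*)); last first.
  by move=> i j; apply: eq_bigr => k _; apply: eq_bigr => l _; rewrite A12.
by apply: eq_bigr => i _; apply: eq_bigr => j _; rewrite inner_sym conj_symmx.
Qed.

Lemma herm_psd_cmx (Y : 'M[R]_n) : sym_psd Y -> herm_psd (cmx Y).
Proof.
move=> [YT Ypsd]; split; first by rewrite ctrmx_cmx /cmx map_trmx YT.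
move=> v; rewrite /ctrmx bilinear_formE.
have YC i j : cmx Y i j = cmx Y j i by rewrite -{1}YT !mxE.
under eq_bigr => i _ do under eq_bigr => j _ do rewrite mulrC.
rewrite (@sum_mul_symmetrize _ _ (cmx Y)) /=; last exact: YC.
pose re := map_mx Re v; pose im := map_mx Im v.
have -> : \sum_i \sum_j cmx Y i j * ((map_mx Num.conj v i 0 * v j 0 +
      map_mx Num.conj v j 0 * v i 0) / 2%:R) =
    ((re^T *m Y *m re) 0 0 + (im^T *m Y *m im) 0 0)%:C%C.
  rewrite !bilinear_formE -big_split rmorph_sum; apply: eq_bigr => i _.
  rewrite -big_split rmorph_sum; apply: eq_bigr => j _.
  by rewrite !mxE conj_mul_sym_Re -rmorphM /=; congr (_%:C)%C; ring.
by rewrite lecR addr_ge0.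
Qed.

Lemma sym_psd_Re (X : 'M[R[i]]_n) : herm_psd X -> sym_psd (map_mx Re X).
Proof.
move=> [XH Xpsd]; split.
  by apply/matrixP => i j; rewrite !mxE (herm_entryC XH) Re_conj.
move=> u; rewrite -ler0c.
have -> : ((u^T *m map_mx Re X *m u) 0 0)%:C%C =
    (ctrmx (cmx u) *m X *m cmx u) 0 0.
  rewrite ctrmx_cmx [RHS]quad_form_symmx symmx_herm // /cmx map_trmx -!map_mxM.
  by rewrite [RHS]mxE.
exact: Xpsd.
Qed.

End ComplexMatrices.

Theorem corollary5p4 (R : realType) (n : nat) (A : tensor4 R[i] n) :
  CPS A ->
  ((forall X : 'M[R[i]]_n, herm_psd X -> 0 <= tform A X) <->
   (forall X : 'M[R]_n, sym_psd X -> 0 <= tform A (cmx X))).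
Proof.
move=> [_ [A12 A34]]; split=> [HC Y /herm_psd_cmx | HR X XHpsd]; first exact: HC.
rewrite (tform_symmx X A12 A34) symmx_herm; last by case: XHpsd.
exact/HR/sym_psd_Re.
Qed.
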